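(* Suppose $\Phi$ is of affine type, $c$ is a Coxeter element, and $\beta$ is a root contained in $U_c$. Then $E_c(\beta^\vee,\delta)=E_c(\delta^\vee,\beta)=0$.
   Context: $A=[a_{ij}]_{1\le i,j\le n}$ is a symmetrizable Cartan matrix of affine type with symmetrizing constants $d_i$; $V$ has basis of simple roots $\alpha_1,\dots,\alpha_n$, simple co-roots $\alpha_i^\vee=d_i^{-1}\alpha_i$, and symmetric bilinear form $K$ with $K(\alpha_i^\vee,\alpha_j)=a_{ij}$; $W$ is generated by $s_i(v)=v-K(\alpha_i^\vee,v)\alpha_i$. $\Phi$ is the root system; its imaginary roots are the nonzero integer multiples of $\delta$, the positive imaginary root closest to $0$. For a real root $\beta$, $\beta^\vee=\frac2{K(\beta,\beta)}\beta$; $\delta^\vee$ is the positive imaginary root closest to $0$ in the dual root system (Cartan matrix $A^T$), a positive multiple of $\delta$ (and $\beta^\vee$ means $\delta^\vee$ when $\beta=\delta$). A Coxeter element $c$ is indexed as $c=s_1\cdots s_n$; $E_c$ is the bilinear form on $V$ with $E_c(\alpha_i^\vee,\alpha_j)=a_{ij}$ if $i>j$, $1$ if $i=j$, $0$ if $i<j$. With $\alpha_{\mathrm{aff}}$ the affine simple root and $V_{\mathrm{fin}}$ the span of the other simple roots, $\gamma_c$ is the unique vector of $V_{\mathrm{fin}}$ with $c\gamma_c=\gamma_c+\delta$, and $U_c=\{v\in V:K(\gamma_c,v)=0\}$. *)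

From HB Require Import structures.
From mathcomp Require Import all_boot all_order all_algebra.
Set Implicit Arguments. Unset Strict Implicit. Unset Printing Implicit Defensive.
Import Order.TTheory GRing.Theory Num.Theory.
Local Open Scope ring_scope.

(* Vectors of V are column vectors of coordinates w.r.t. the simple roots
   alpha_1..alpha_n (indexed by 'I_n), over the rationals. *)

Definition Ar (n : nat) (A : 'M[int]_n) : 'M[rat]_n := map_mx (fun z : int => z%:~R) A.

Definition sroot (n : nat) (j : 'I_n) : 'cV[rat]_n := delta_mx j 0.

Definition is_GCM (n : nat) (A : 'M[int]_n) : Prop :=
  (forall i, A i i = 2) /\
  (forall i j, i != j -> A i j <= 0) /\
  (forall i j, A i j = 0 <-> A j i = 0).

Definition indecomposable (n : nat) (A : 'M[int]_n) : Prop :=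
  forall S : {set 'I_n}, S != set0 -> S != setT ->
    exists i j, [/\ i \in S, j \notin S & A i j != 0].

(* Kac, Infinite-dimensional Lie algebras, Thm 4.3 (Aff) *)
Definition affine_type (n : nat) (A : 'M[int]_n) : Prop :=
  [/\ is_GCM A, indecomposable A,
      \rank (Ar A) = n.-1,
      (exists u : 'cV[rat]_n, (forall i, 0 < u i 0) /\ Ar A *m u = 0)
    & (forall v : 'cV[rat]_n, (forall i, 0 <= (Ar A *m v) i 0) -> Ar A *m v = 0)].

Definition symmetrizing (n : nat) (A : 'M[int]_n) (d : 'I_n -> rat) : Prop :=
  (forall i, 0 < d i) /\ (forall i j, d i * (A i j)%:~R = d j * (A j i)%:~R).

(* K(x,y), with K(alpha_i, alpha_j) = d_i a_ij, i.e. K(alpha_i^vee, alpha_j) = a_ij *)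
Definition Kform (n : nat) (A : 'M[int]_n) (d : 'I_n -> rat) (x y : 'cV[rat]_n) : rat :=
  \sum_i \sum_j x i 0 * y j 0 * d i * (A i j)%:~R.

(* s_i(v) = v - K(alpha_i^vee, v) alpha_i *)
Definition refl (n : nat) (A : 'M[int]_n) (i : 'I_n) (v : 'cV[rat]_n) : 'cV[rat]_n :=
  v - (\sum_j (A i j)%:~R * v j 0) *: sroot i.

Definition wact (n : nat) (A : 'M[int]_n) (w : seq 'I_n) (v : 'cV[rat]_n) : 'cV[rat]_n :=
  foldr (refl A) v w.

Definition coxeter (n : nat) (A : 'M[int]_n) (v : 'cV[rat]_n) : 'cV[rat]_n :=
  wact A (enum 'I_n) v.

Definition is_int (x : rat) : Prop := exists z : int, x = z%:~R.

(* delta = positive imaginary root closest to 0: the smallest positive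
   integral vector in the kernel of A *)
Definition is_delta (n : nat) (A : 'M[int]_n) (delta : 'cV[rat]_n) : Prop :=
  [/\ forall i, 0 < delta i 0, forall i, is_int (delta i 0), Ar A *m delta = 0
    & forall u : 'cV[rat]_n, (forall i, 0 < u i 0) -> (forall i, is_int (u i 0)) ->
        Ar A *m u = 0 -> forall i, delta i 0 <= u i 0].

(* delta^vee expressed in V: if b is the delta of the dual system (Cartan
   matrix A^T, simple roots alpha_i^vee = d_i^{-1} alpha_i), then
   delta^vee = sum_i b_i alpha_i^vee. *)
Definition dual_delta (n : nat) (d : 'I_n -> rat) (b : 'cV[rat]_n) : 'cV[rat]_n :=
  \col_i (b i 0 / d i).

Definition real_root (n : nat) (A : 'M[int]_n) (beta : 'cV[rat]_n) : Prop :=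
  exists (w : seq 'I_n) (j : 'I_n), beta = wact A w (sroot j).

Definition imag_root (n : nat) (delta beta : 'cV[rat]_n) : Prop :=
  exists k : int, k != 0 /\ beta = k%:~R *: delta.

Definition is_root (n : nat) (A : 'M[int]_n) (delta beta : 'cV[rat]_n) : Prop :=
  real_root A beta \/ imag_root delta beta.

Definition coroot_of (n : nat) (A : 'M[int]_n) (d : 'I_n -> rat)
    (delta deltav beta betav : 'cV[rat]_n) : Prop :=
  (real_root A beta /\ betav = (2 / Kform A d beta beta) *: beta) \/
  (exists k : int, [/\ k != 0, beta = k%:~R *: delta & betav = k%:~R *: deltav]).

Definition Ecoef (n : nat) (A : 'M[int]_n) (i j : 'I_n) : rat :=
  if (j < i)%N then (A i j)%:~R else if i == j then 1 else 0.

Definition Ec (n : nat) (A : 'M[int]_n) (d : 'I_n -> rat) (x y : 'cV[rat]_n) : rat :=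
  \sum_i \sum_j x i 0 * y j 0 * d i * Ecoef A i j.

From mathcomp Require Import all_boot all_order all_algebra ring.
Import Order.TTheory GRing.Theory Num.Theory.
Local Open Scope ring_scope.

(* For c = s_1 ... s_n and any v, E_c(v - c v, -) = K(v, -): peeling off the
   reflections one at a time, v - c v = sum_k K(alpha_k^vee, s_(k+1)...s_n v) alpha_k,
   and E_c is the "lower triangular half" of K. With c gamma = gamma + delta this
   gives E_c(delta, -) = - K(gamma, -), which vanishes on U_c and, since delta is
   K-isotropic, at delta. Both claims follow because delta^vee is a multiple of
   delta (the kernel of A is a line), beta^vee is a multiple of beta or of
   delta^vee, and E_c(x, y) + E_c(y, x) = K(x, y). *)

Section BilinearForm.
Context {n : nat} (d : 'I_n -> rat).

Definition bform (M : 'I_n -> 'I_n -> rat) (x y : 'cV[rat]_n) : rat :=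
  \sum_i \sum_j x i 0 * y j 0 * d i * M i j.

Lemma srootE (i j : 'I_n) : sroot i j 0 = (j == i)%:R.
Proof. by rewrite mxE eqxx andbT. Qed.

Variable M : 'I_n -> 'I_n -> rat.

Lemma bformDl (x1 x2 y : 'cV[rat]_n) :
  bform M (x1 + x2) y = bform M x1 y + bform M x2 y.
Proof.
rewrite /bform -big_split /=; apply: eq_bigr => i _.
by rewrite -big_split /=; apply: eq_bigr => j _; rewrite mxE; ring.
Qed.

Lemma bformZl a (x y : 'cV[rat]_n) : bform M (a *: x) y = a * bform M x y.
Proof.
rewrite /bform mulr_sumr; apply: eq_bigr => i _.
by rewrite mulr_sumr; apply: eq_bigr => j _; rewrite mxE; ring.
Qed.

Lemma bform_sroot_r (x : 'cV[rat]_n) j :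
  bform M x (sroot j) = \sum_i x i 0 * d i * M i j.
Proof.
apply: eq_bigr => i _; rewrite (bigD1 j) //= big1 => [|k /negbTE kj].
  by rewrite srootE eqxx addr0 mulr1.
by rewrite srootE kj mulr0 !mul0r.
Qed.

Lemma bform_sroot_sroot i j : bform M (sroot i) (sroot j) = d i * M i j.
Proof.
rewrite bform_sroot_r (bigD1 i) //= big1 => [|k /negbTE ki].
  by rewrite srootE eqxx addr0 mul1r.
by rewrite srootE ki !mul0r.
Qed.

Lemma bform_expand_r (x y : 'cV[rat]_n) :
  bform M x y = \sum_j y j 0 * bform M x (sroot j).
Proof.
rewrite {1}/bform exchange_big; apply: eq_bigr => j _.
by rewrite bform_sroot_r mulr_sumr; apply: eq_bigr => i _; ring.
Qed.

End BilinearForm.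

Section CoxeterForm.
Context {n : nat} {A : 'M[int]_n} {d : 'I_n -> rat}.

Lemma EcE (x y : 'cV[rat]_n) : Ec A d x y = bform d (Ecoef A) x y.
Proof. by []. Qed.

Lemma EcZl a (x y : 'cV[rat]_n) : Ec A d (a *: x) y = a * Ec A d x y.
Proof. exact: bformZl. Qed.

Lemma KformE (x y : 'cV[rat]_n) :
  Kform A d x y = bform d (fun i j => (A i j)%:~R) x y.
Proof. by []. Qed.

Lemma Kform_mulmx (x y : 'cV[rat]_n) :
  Kform A d x y = \sum_i x i 0 * d i * (Ar A *m y) i 0.
Proof.
apply: eq_bigr => i _; rewrite !mxE mulr_sumr.
by apply: eq_bigr => j _; rewrite mxE; ring.
Qed.

Lemma Kform_ker_r (x y : 'cV[rat]_n) : Ar A *m y = 0 -> Kform A d x y = 0.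
Proof.
by move=> Ay0; rewrite Kform_mulmx big1 // => i _; rewrite Ay0 mxE mulr0.
Qed.

Lemma Ec_Kform_sroot_above (u : 'cV[rat]_n) (k : 'I_n) :
  (forall j, u j 0 != 0 -> (k < j)%N) -> Ec A d u (sroot k) = Kform A d u (sroot k).
Proof.
move=> u_supp; rewrite EcE KformE !bform_sroot_r; apply: eq_bigr => j _.
have [-> | /u_supp kj] := eqVneq (u j 0) 0; first by rewrite !mul0r.
by rewrite /Ecoef kj.
Qed.

Hypothesis symA : symmetrizing A d.

Lemma refl_coefE (y : 'cV[rat]_n) k :
  (\sum_l (A k l)%:~R * y l 0) * d k = Kform A d y (sroot k).
Proof.
rewrite KformE bform_sroot_r mulr_suml; apply: eq_bigr => l _.
by rewrite -[RHS]mulrA (proj2 symA l k); ring.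
Qed.

Lemma Ec_sub_wact_sorted (s : seq 'I_n) (x : 'cV[rat]_n) :
  sorted (fun i j : 'I_n => (i < j)%N) s ->
  (forall j, (x - wact A s x) j 0 != 0 -> j \in s) /\
  {in s, forall i, Ec A d (x - wact A s x) (sroot i) = Kform A d x (sroot i)}.
Proof.
elim: s => [|k s IHs] /=; first by split=> // j; rewrite subrr mxE eqxx.
rewrite path_sortedE; last exact: ltn_trans.
case/andP => /allP k_lt_s /IHs [supp_s Ec_s].
set y := wact A s x; set c := \sum_l (A k l)%:~R * y l 0.
have sub_refl : x - refl A k y = (x - y) + c *: sroot k.
  by rewrite /refl opprB addrA addrAC.
rewrite sub_refl; split.
  move=> j; rewrite inE mxE [(c *: sroot k) j 0]mxE srootE.
  by have [// | _] := eqVneq j k; rewrite mulr0 addr0 => /supp_s.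
move=> i; rewrite inE EcE bformDl bformZl bform_sroot_sroot -EcE.
have [-> _ | ik /= i_s] := eqVneq i k.
  rewrite Ec_Kform_sroot_above => [|j /supp_s /k_lt_s //].
  by rewrite /Ecoef ltnn eqxx mulr1 refl_coefE KformE -bformDl subrK.
have ki : (k < i)%N := k_lt_s i i_s.
by rewrite /Ecoef ltnNge ltnW //= eq_sym (negbTE ik) !mulr0 addr0 Ec_s.
Qed.

Lemma Ec_sub_coxeter (x y : 'cV[rat]_n) : Ec A d (x - coxeter A x) y = Kform A d x y.
Proof.
have sorted_enum : sorted (fun i j : 'I_n => (i < j)%N) (enum 'I_n).
  by have := iota_ltn_sorted 0 n; rewrite -val_enum_ord sorted_map.
have [_ Ec_enum] := Ec_sub_wact_sorted _ x sorted_enum.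
rewrite EcE KformE !bform_expand_r; apply: eq_bigr => j _.
by rewrite -EcE -KformE Ec_enum ?mem_enum.
Qed.

Hypothesis diagA : forall i, A i i = 2.

Lemma Ec_symmetrized (x y : 'cV[rat]_n) : Ec A d x y + Ec A d y x = Kform A d x y.
Proof.
rewrite /Ec [X in _ + X]exchange_big -big_split /=; apply: eq_bigr => i _.
rewrite -big_split /=; apply: eq_bigr => j _; rewrite /Ecoef.
have [ij | ji | /val_inj ->] := ltngtP i j.
- rewrite (ltn_eqF ij : (i == j) = false) mulr0 add0r.
  by rewrite -[LHS]mulrA (proj2 symA j i); ring.
- by rewrite (ltn_eqF ji : (j == i) = false) mulr0 addr0.
- by rewrite eqxx diagA; ring.
Qed.

End CoxeterForm.

Lemma dual_delta_ker {n : nat} {A : 'M[int]_n} {d : 'I_n -> rat} {b : 'cV[rat]_n} :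
  symmetrizing A d -> Ar A^T *m b = 0 -> Ar A *m dual_delta d b = 0.
Proof.
move=> [d_gt0 symA] Atb0; apply/matrixP => i k; rewrite ord1 !mxE.
have := congr1 (fun v : 'cV[rat]_n => v i 0) Atb0; rewrite !mxE => Atb0_i.
transitivity ((d i)^-1 * \sum_j Ar A^T i j * b j 0); last by rewrite Atb0_i mulr0.
rewrite mulr_sumr; apply: eq_bigr => j _.
have dj_neq0 : d j != 0 by rewrite gt_eqF.
rewrite /Ar !mxE -[(A j i)%:~R](mulKf dj_neq0) symA.
by field; rewrite !gt_eqF.
Qed.

Lemma colinear_in_ker_corank1 {F : fieldType} {m n : nat} {M : 'M[F]_(m, n)}
    {u v : 'cV[F]_n} :
  (0 < n)%N -> \rank M = n.-1 -> M *m u = 0 -> u != 0 -> M *m v = 0 ->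
  exists t, v = t *: u.
Proof.
move=> n_gt0 rkM Mu0 u_neq0 Mv0.
have ker_tr (w : 'cV[F]_n) : M *m w = 0 -> (w^T <= kermx M^T)%MS.
  by move=> Mw0; apply/sub_kermxP; rewrite -trmx_mul Mw0 trmx0.
have rk_ker : \rank (kermx M^T) = 1%N.
  by rewrite mxrank_ker mxrank_tr rkM -{1}(prednK n_gt0) subSnn.
have rk_u : \rank u^T = 1%N.
  apply/eqP; rewrite eqn_leq rank_leq_row lt0n mxrank_eq0.
  by apply: contra u_neq0 => /eqP uT0; rewrite -(trmxK u) uT0 trmx0.
have /andP [_ ker_le_u] : (u^T == kermx M^T)%MS.
  by rewrite -(mxrank_leqif_eq (ker_tr u Mu0)) rk_ker rk_u.
have /submxP [D vD] := submx_trans (ker_tr v Mv0) ker_le_u.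
exists (D 0 0); apply/matrixP => i k; rewrite ord1.
have := congr1 (fun w : 'rV[F]_n => w 0 i) vD; rewrite !mxE big_ord1 => ->.
by rewrite !mxE.
Qed.

Theorem proposition2p16 (n : nat) (A : 'M[int]_n) (d : 'I_n -> rat) (aff : 'I_n)
    (delta b gamma beta betav : 'cV[rat]_n) :
  affine_type A -> symmetrizing A d ->
  is_delta A delta -> is_delta A^T b ->
  (* gamma_c: the vector of V_fin = span{alpha_i : i <> aff} with c gamma = gamma + delta *)
  gamma aff 0 = 0 -> coxeter A gamma = gamma + delta ->
  (* beta is a root lying in U_c, with coroot betav *)
  is_root A delta beta -> Kform A d gamma beta = 0 ->
  coroot_of A d delta (dual_delta d b) beta betav ->
  Ec A d betav delta = 0 /\ Ec A d (dual_delta d b) beta = 0.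
Proof.
move=> [[diagA _] _ rkA _ _] symA [delta_gt0 _ Adelta0 _] [_ _ Atb0 _] _ cox_gamma
  _ beta_Uc betav_coroot.
have delta_neq0 : delta != 0.
  by apply/eqP => delta0; have := delta_gt0 aff; rewrite delta0 mxE ltxx.
have n_gt0 : (0 < n)%N := leq_ltn_trans (leq0n aff) (ltn_ord aff).
have [t deltav_def] :=
  colinear_in_ker_corank1 n_gt0 rkA Adelta0 delta_neq0 (dual_delta_ker symA Atb0).
have Ec_delta y : Ec A d delta y = - Kform A d gamma y.
  by rewrite -(Ec_sub_coxeter symA) cox_gamma opprD addNKr -scaleN1r EcZl mulN1r opprK.
have Ec_delta_beta : Ec A d delta beta = 0 by rewrite Ec_delta beta_Uc oppr0.
have Ec_delta_delta : Ec A d delta delta = 0 by rewrite Ec_delta Kform_ker_r ?oppr0.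
split; last by rewrite deltav_def EcZl Ec_delta_beta mulr0.
case: betav_coroot => [[_ ->] | [k [_ _ ->]]]; rewrite EcZl; last first.
  by rewrite deltav_def EcZl Ec_delta_delta !mulr0.
have := Ec_symmetrized symA diagA beta delta.
by rewrite Ec_delta_beta addr0 Kform_ker_r // => ->; rewrite mulr0.
Qed.
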